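(* Let $|\psi\rangle$ be an $n$-qubit pure state and let $s\subseteq[n]$. Suppose that for every $X\in\mathcal{P}(s)$ with $X\neq\emptyset$ the subsystems $X$ and $X^c$ carry equispaced nondegenerate Hamiltonians $H_X=\sum_{j=0}^{d_X-1} j\,\epsilon^X|\epsilon_j^X\rangle\langle\epsilon_j^X|$ and $H_{X^c}=\sum_{j=0}^{d_{X^c}-1} j\,\epsilon^{X^c}|\epsilon_j^{X^c}\rangle\langle\epsilon_j^{X^c}|$ with $\epsilon^X,\epsilon^{X^c}>0$ and $d_X=\dim\mathcal{H}_X$, $d_{X^c}=\dim\mathcal{H}_{X^c}$, and the bipartite system $X|X^c$ carries $H_X\otimes\mathbb{I}+\mathbb{I}\otimes H_{X^c}$. Then $$M^{(s)}_B(|\psi\rangle)=2\,M^{(s)}_E(|\psi\rangle);$$ more precisely, $\Delta^{cg}_{X|X^c}(|\psi\rangle)=2\Delta_{X|X^c}(|\psi\rangle)$ for every such $X$.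
   Context: For a system with Hamiltonian $H=\sum_j\epsilon_j|\epsilon_j\rangle\langle\epsilon_j|$, eigenvalues ordered $\epsilon_0=0\le\epsilon_1\le\cdots\le\epsilon_{d-1}$, and a state $\rho$ with eigenvalues $p_0\ge p_1\ge\cdots\ge p_{d-1}$: the passive state is $\rho^p=\sum_j p_j|\epsilon_j\rangle\langle\epsilon_j|$ (minimal energy in the unitary orbit of $\rho$) and the active state is $\rho^{ac}=\sum_j p_{d-1-j}|\epsilon_j\rangle\langle\epsilon_j|$ (maximal energy in the unitary orbit). The battery capacity is $\mathcal{C}(\rho)=\mathrm{tr}(\rho^{ac}H)-\mathrm{tr}(\rho^pH)$. For an $n$-qubit pure state $|\psi\rangle$ and $X\subseteq[n]$, write $\rho_X=\mathrm{tr}_{X^c}|\psi\rangle\langle\psi|$ ($X^c=[n]\setminus X$). The ergotropic gap is $\Delta_{X|X^c}(|\psi\rangle)=\mathrm{tr}(\rho_X^pH_X)+\mathrm{tr}(\rho_{X^c}^pH_{X^c})$, and the battery capacity gap is $\Delta^{cg}_{X|X^c}(|\psi\rangle)=\mathcal{C}(|\psi\rangle\langle\psi|)-\mathcal{C}(\rho_X)-\mathcal{C}(\rho_{X^c})$, where $\mathcal{C}(|\psi\rangle\langle\psi|)$ is taken with respect to $H_X\otimes\mathbb{I}+\mathbb{I}\otimes H_{X^c}$; both gaps are set to $0$ when $X=\emptyset$ or $X=[n]$. $\mathcal{P}(s)$ is the power set of $s$. The ergotropic-gap concentratable entanglement is $M^{(s)}_E(|\psi\rangle)=2^{-|s|}\sum_{X\in\mathcal{P}(s)}\Delta_{X|X^c}(|\psi\rangle)$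 and the battery capacity-gap concentratable entanglement is $M^{(s)}_B(|\psi\rangle)=2^{-|s|}\sum_{X\in\mathcal{P}(s)}\Delta^{cg}_{X|X^c}(|\psi\rangle)$. *)

(* Scalars: an arbitrary numClosedFieldType C (e.g. complex R
   for R : rcfType, i.e. the complex numbers).  Operators on a finite-dimensional
   Hilbert space with orthonormal computational basis indexed by a finType T are
   functions T -> T -> C (matrix entries); kets are functions T -> C. *)
From Stdlib Require Import ClassicalEpsilon.
From HB Require Import structures.
From mathcomp Require Import all_boot all_order all_algebra.
Unset Printing Implicit Defensive.
Import Order.TTheory GRing.Theory Num.Theory.
Local Open Scope ring_scope.

Definition Ket (C : numClosedFieldType) (T : finType) := T -> C.
Definition Op (C : numClosedFieldType) (T : finType) := T -> T -> C.
Definition qconf (n : nat) := {ffun 'I_n -> bool}.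
Definition conf {n : nat} (X : {set 'I_n}) := {ffun {i : 'I_n | i \in X} -> bool}.
Definition restr {n : nat} (X : {set 'I_n}) (a : qconf n) : conf X :=
  [ffun i => a (val i)].

Section Defs.
Context {C : numClosedFieldType}.



Definition tr {T : finType} (A : Op C T) : C := \sum_(t : T) A t t.
Definition mulop {T : finType} (A B : Op C T) : Op C T :=
  fun s t => \sum_(u : T) A s u * B u t.
Definition outer {T : finType} (v w : Ket C T) : Op C T := fun s t => v s * (w t)^*.

Definition orthonormal {T : finType} (v : 'I_#|T| -> Ket C T) : Prop :=
  forall j k : 'I_#|T|, \sum_(t : T) (v j t)^* * v k t = (j == k)%:R.

Definition sorted_spec_decomp {T : finType} (A : Op C T) (asc : bool)
    (l : 'I_#|T| -> C) (v : 'I_#|T| -> Ket C T) : Prop :=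
  [/\ orthonormal v,
      forall j, l j \is Num.real,
      forall i j : 'I_#|T|, (i <= j)%N -> if asc then l i <= l j else l j <= l i
    & forall s t, A s t = \sum_(j < #|T|) l j * v j s * (v j t)^*].

Lemma eigsys_inhabited {T : finType} :
  inhabited (('I_#|T| -> C) * ('I_#|T| -> Ket C T)).
Proof. exact: (inhabits ((fun _ => 0), (fun _ _ => 0))). Qed.

Definition eigsys {T : finType} (A : Op C T) (asc : bool) :
    ('I_#|T| -> C) * ('I_#|T| -> Ket C T) :=
  epsilon (@eigsys_inhabited T) (fun p => sorted_spec_decomp A asc p.1 p.2).

Definition state_eigs {T : finType} (rho : Op C T) := (eigsys rho false).1.
Definition ham_basis {T : finType} (H : Op C T) := (eigsys H true).2.

Definition passive {T : finType} (rho H : Op C T) : Op C T :=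
  fun s t => \sum_(j < #|T|)
    state_eigs rho j * ham_basis H j s * (ham_basis H j t)^*.
Definition active {T : finType} (rho H : Op C T) : Op C T :=
  fun s t => \sum_(j < #|T|)
    state_eigs rho (rev_ord j) * ham_basis H j s * (ham_basis H j t)^*.

Definition passive_energy {T : finType} (rho H : Op C T) : C :=
  tr (mulop (passive rho H) H).
Definition active_energy {T : finType} (rho H : Op C T) : C :=
  tr (mulop (active rho H) H).
Definition capacity {T : finType} (rho H : Op C T) : C :=
  active_energy rho H - passive_energy rho H.

(* computational basis of the n-qubit space: bit strings 'I_n -> bool *)
(* computational basis of the subsystem X (dimension 2^|X|) *)

Definition normalized {n : nat} (psi : Ket C (qconf n)) : Prop :=
  \sum_(a : qconf n) psi a * (psi a)^* = 1.

(* partial trace over X^c:  rho_X = tr_{X^c} rho *)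
Definition ptrace {n : nat} (X : {set 'I_n}) (rho : Op C (qconf n)) : Op C (conf X) :=
  fun x x' => \sum_(a : qconf n) \sum_(a' : qconf n)
    if [&& restr X a == x, restr X a' == x' & restr (~: X) a == restr (~: X) a']
    then rho a a' else 0.

(* H_X (x) I + I (x) H_{X^c}, acting on the n-qubit space = H_X (x) H_{X^c} *)
Definition bipartite_ham {n : nat} {X : {set 'I_n}}
    (HX : Op C (conf X)) (HXc : Op C (conf (~: X))) : Op C (qconf n) :=
  fun a a' =>
    HX (restr X a) (restr X a') * (restr (~: X) a == restr (~: X) a')%:R
    + (restr X a == restr X a')%:R * HXc (restr (~: X) a) (restr (~: X) a').

Definition ergo_gap {n : nat} (psi : Ket C (qconf n)) (X : {set 'I_n})
    (HX : Op C (conf X)) (HXc : Op C (conf (~: X))) : C :=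
  if (X == set0) || (X == setT) then 0 else
  let rho := outer psi psi in
  passive_energy (ptrace X rho) HX + passive_energy (ptrace (~: X) rho) HXc.

Definition capacity_gap {n : nat} (psi : Ket C (qconf n)) (X : {set 'I_n})
    (HX : Op C (conf X)) (HXc : Op C (conf (~: X))) : C :=
  if (X == set0) || (X == setT) then 0 else
  let rho := outer psi psi in
  capacity rho (bipartite_ham HX HXc)
  - capacity (ptrace X rho) HX - capacity (ptrace (~: X) rho) HXc.

Definition M_E {n : nat} (s : {set 'I_n}) (psi : Ket C (qconf n))
    (HX : forall X : {set 'I_n}, Op C (conf X))
    (HXc : forall X : {set 'I_n}, Op C (conf (~: X))) : C :=
  (2 ^+ #|s|)^-1 * \sum_(X in powerset s) ergo_gap psi X (HX X) (HXc X).

Definition M_B {n : nat} (s : {set 'I_n}) (psi : Ket C (qconf n))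
    (HX : forall X : {set 'I_n}, Op C (conf X))
    (HXc : forall X : {set 'I_n}, Op C (conf (~: X))) : C :=
  (2 ^+ #|s|)^-1 * \sum_(X in powerset s) capacity_gap psi X (HX X) (HXc X).

Definition equispaced {T : finType} (H : Op C T) (eps : C) : Prop :=
  0 < eps /\ exists e : 'I_#|T| -> Ket C T, orthonormal e /\
    forall s t, H s t = \sum_(j < #|T|) (j%:R * eps) * e j s * (e j t)^*.

End Defs.

From Stdlib Require Import ClassicalEpsilon.
From Pilot Require Import Defs.
From HB Require Import structures.
From mathcomp Require Import all_boot all_order all_algebra.
From mathcomp Require Import ring zify.
Import Order.TTheory GRing.Theory Num.Theory.
Local Open Scope ring_scope.

(* For an equispaced Hamiltonian with spacing eps on a d-dimensional space the
   ascending eigenvalues are exactly j * eps, so for a state rho of unit trace the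
   active energy sum_j p_(d-1-j) j eps equals (d - 1) eps minus the passive energy:
   C(rho) = (d - 1) eps - 2 tr(rho^p H).  A pure state has spectrum (1, 0, ..., 0),
   so its capacity is the spread lambda_max - lambda_min of the total Hamiltonian.
   The quadratic form of H_X (x) I + I (x) H_(X^c) splits into the two local forms,
   which gives the Rayleigh bounds 0 and (d_X - 1) eps^X + (d_(X^c) - 1) eps^(X^c),
   both attained by product eigenvectors.  Subtracting the two local capacities
   from this spread leaves twice the ergotropic gap. *)

Lemma ord_homo_ltn_ge {n} {f : 'I_n -> 'I_n} :
  {homo f : i j / (i < j)%N} -> forall i : 'I_n, (i <= f i)%N.
Proof.
move=> incr [m hm]; elim: m hm => [//|m IH] hm.
exact: leq_ltn_trans (IH (ltnW hm)) (incr (Ordinal (ltnW hm)) (Ordinal hm) (ltnSn m)).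
Qed.

Lemma ord_homo_ltn_id {n} {f : 'I_n -> 'I_n} :
  {homo f : i j / (i < j)%N} -> forall i, f i = i.
Proof.
move=> incr i; apply: val_inj; apply/eqP; rewrite /= eqn_leq ord_homo_ltn_ge // andbT.
have /(_ (rev_ord i)) : forall j : 'I_n, (j <= rev_ord (f (rev_ord j)))%N.
  apply: ord_homo_ltn_ge => j k lt_jk /=.
  have lt_rev : (rev_ord k < rev_ord j)%N by rewrite /=; move: (ltn_ord k); lia.
  by move: (incr _ _ lt_rev) (ltn_ord (f (rev_ord j))); lia.
rewrite rev_ordK /=; move: (ltn_ord i) (ltn_ord (f i)); lia.
Qed.

Lemma ord_leq_subn1 n (j : 'I_n) : (j <= n - 1)%N.
Proof. by rewrite subn1 -ltnS (ltn_predK (ltn_ord j)). Qed.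

Lemma rev_ord_addn n (j : 'I_n) : (rev_ord j + j = n - 1)%N.
Proof. by move: (ltn_ord j); rewrite /=; lia. Qed.

Lemma sort_ord_exists n (r : rel 'I_n) : total r -> transitive r ->
  exists2 sg : 'I_n -> 'I_n, injective sg &
    forall i j : 'I_n, (i <= j)%N -> r (sg i) (sg j).
Proof.
move=> rtot rtr; have rrf : reflexive r by move=> i; have /orP[] := rtot i i.
pose s := sort r (enum 'I_n).
have ss : size s = n by rewrite size_sort size_enum_ord.
have us : uniq s by rewrite sort_uniq enum_uniq.
have so : sorted r s := sort_sorted rtot _.
exists (fun i => nth i s i).
  move=> i j /eqP; rewrite (set_nth_default i j) ?ss // nth_uniq ?ss //.
  by move=> /eqP /val_inj.
move=> i j hij; rewrite (set_nth_default i j) ?ss //.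
have := sorted_leq_nth rtr rrf i so => /(_ i j); rewrite !inE ss.
by move=> /(_ (ltn_ord i) (ltn_ord j) hij).
Qed.

Lemma sum_mulr_eqb (R : pzSemiRingType) (I : finType) (F : I -> R) k :
  \sum_j F j * (j == k)%:R = F k.
Proof.
by rewrite (bigD1 k) //= eqxx mulr1 big1 ?addr0 // => j /negbTE ->; rewrite mulr0.
Qed.

Section Spectral.
Context {C : numClosedFieldType} {T : finType}.
Implicit Types (A H : Op C T) (u w : Ket C T) (v : 'I_#|T| -> Ket C T).

Definition hermitian A := forall s t, A t s = (A s t)^*.
Definition dotp u w := \sum_t (u t)^* * w t.
Definition qform A u := \sum_s \sum_t (u s)^* * A s t * u t.

Lemma conj_dotp u w : (dotp u w)^* = dotp w u.
Proof.
by rewrite /dotp rmorph_sum; apply: eq_bigr => t _; rewrite rmorphM /= conjCK mulrC.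
Qed.

Lemma dotp_scaler u c : dotp (fun t => u t * c) (fun t => u t * c) = c^* * c * dotp u u.
Proof. by rewrite /dotp big_distrr; apply: eq_bigr => t _ /=; rewrite rmorphM /=; ring. Qed.

Lemma qform_scaler A u c : qform A (fun t => u t * c) = c^* * c * qform A u.
Proof.
rewrite /qform big_distrr; apply: eq_bigr => s _; rewrite big_distrr.
by apply: eq_bigr => t _ /=; rewrite rmorphM /=; ring.
Qed.

Lemma dotp_eq_fun {u u'} : u =1 u' -> dotp u u = dotp u' u'.
Proof. by move=> e; apply: eq_bigr => t _; rewrite !e. Qed.

Lemma qform_eq_fun A {u u'} : u =1 u' -> qform A u = qform A u'.
Proof. by move=> e; apply: eq_bigr => s _; apply: eq_bigr => t _; rewrite !e. Qed.

Lemma orthonormal_complete v : Defs.orthonormal v ->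
  forall s t, \sum_j v j s * (v j t)^* = (s == t)%:R.
Proof.
move=> ov s t.
pose P : 'M[C]_#|T| := \matrix_(j, i) (v j (enum_val i))^*.
pose Q : 'M[C]_#|T| := \matrix_(i, k) v k (enum_val i).
have PQ : P *m Q = 1%:M.
  apply/matrixP => j k; rewrite !mxE -(ov j k).
  rewrite (big_enum_val (A:=predT) (fun t => (v j t)^* * v k t)) /=.
  by apply: eq_bigr => i _; rewrite !mxE.
have /matrixP /(_ (enum_rank s) (enum_rank t)) := mulmx1C PQ.
rewrite !mxE (inj_eq enum_rank_inj) => <-.
by apply: eq_bigr => j _; rewrite !mxE !enum_rankK.
Qed.

Lemma orthonormal_dotpp {v} : Defs.orthonormal v -> forall k, dotp (v k) (v k) = 1.
Proof. by move=> ov k; rewrite [dotp _ _]ov eqxx. Qed.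

Lemma parseval {v} u : Defs.orthonormal v -> \sum_j dotp u (v j) * dotp (v j) u = dotp u u.
Proof.
move=> ov; transitivity (\sum_s \sum_t (u s)^* * u t * \sum_j v j s * (v j t)^*).
  under eq_bigr => j _ do rewrite /dotp big_distrl /=.
  under eq_bigr => j _ do under eq_bigr => s _ do rewrite big_distrr /=.
  rewrite exchange_big /=; apply: eq_bigr => s _.
  rewrite exchange_big /=; apply: eq_bigr => t _.
  by rewrite big_distrr /=; apply: eq_bigr => j _; ring.
apply: eq_bigr => s _; under eq_bigr do rewrite orthonormal_complete //.
by under eq_bigr do rewrite eq_sym; rewrite sum_mulr_eqb.
Qed.

Definition spec_decomp A (l : 'I_#|T| -> C) v :=
  [/\ Defs.orthonormal v, forall j, l j \is Num.real
    & forall s t, A s t = \sum_j l j * v j s * (v j t)^*].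

Lemma sorted_spec_decompW {A asc l v} :
  sorted_spec_decomp A asc l v -> spec_decomp A l v.
Proof. by case. Qed.

Section Decomposition.
Context {A : Op C T} {l : 'I_#|T| -> C} {v : 'I_#|T| -> Ket C T}.
Hypothesis Adec : spec_decomp A l v.

Lemma spec_decomp_hermitian : hermitian A.
Proof.
case: Adec => _ lr hA s t; rewrite !hA rmorph_sum; apply: eq_bigr => j _ /=.
by rewrite !rmorphM /= conjCK (conj_Creal (lr j)); ring.
Qed.

Lemma spec_decomp_eigenvector k s : \sum_t A s t * v k t = l k * v k s.
Proof.
case: Adec => ov _ hA.
transitivity (\sum_j l j * v j s * dotp (v j) (v k)).
  under eq_bigr do rewrite hA big_distrl.
  rewrite exchange_big /=; apply: eq_bigr => j _; rewrite big_distrr.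
  by apply: eq_bigr => t _ /=; rewrite !mulrA.
by under eq_bigr do rewrite [dotp _ _]ov; rewrite sum_mulr_eqb.
Qed.

Lemma qform_spec_decomp u : qform A u = \sum_j l j * (dotp u (v j) * dotp (v j) u).
Proof.
case: Adec => _ _ hA; rewrite /qform.
under eq_bigr => s _ do under eq_bigr => t _ do rewrite hA big_distrr big_distrl /=.
under eq_bigr => s _ do rewrite exchange_big /=.
rewrite exchange_big /=; apply: eq_bigr => j _.
rewrite /dotp big_distrl big_distrr /=; apply: eq_bigr => s _.
by rewrite !big_distrr /=; apply: eq_bigr => t _ /=; ring.
Qed.

Lemma qform_eigenvector k : qform A (v k) = l k.
Proof.
rewrite qform_spec_decomp; case: Adec => ov _ _.
under eq_bigr do rewrite -conj_dotp ![dotp (v _) (v k)]ov.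
rewrite (bigD1 k) //= big1 ?addr0; first by rewrite eqxx conjC1 !mulr1.
by move=> j /negbTE ->; rewrite conjC0 mul0r mulr0.
Qed.

Lemma tr_spec_decomp : tr A = \sum_j l j.
Proof.
case: Adec => ov _ hA; rewrite /tr.
under eq_bigr do rewrite hA.
rewrite exchange_big /=; apply: eq_bigr => j _.
rewrite -[RHS]mulr1 -(orthonormal_dotpp ov j) big_distrr /=.
by apply: eq_bigr => t _; ring.
Qed.

Lemma energy_spec_decomp (q : 'I_#|T| -> C) :
  tr (mulop (fun s t => \sum_j q j * v j s * (v j t)^*) A) = \sum_j q j * l j.
Proof.
case: Adec => ov _ _; rewrite /tr /mulop.
transitivity (\sum_j q j * \sum_u (v j u)^* * \sum_s A u s * v j s).
  under eq_bigr => s _ do under eq_bigr => u _ do rewrite big_distrl /=.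
  under eq_bigr => s _ do rewrite exchange_big /=.
  rewrite exchange_big /=; apply: eq_bigr => j _.
  rewrite exchange_big big_distrr /=; apply: eq_bigr => u _.
  by rewrite !big_distrr /=; apply: eq_bigr => s _; ring.
apply: eq_bigr => j _; under eq_bigr do rewrite spec_decomp_eigenvector.
rewrite -[l j in RHS]mulr1 -(orthonormal_dotpp ov j) !big_distrr /=.
by apply: eq_bigr => t _ /=; ring.
Qed.

Lemma rayleigh_lbound m u : (forall j, m <= l j) -> m * dotp u u <= qform A u.
Proof.
case: Adec => ov _ _ lb; rewrite qform_spec_decomp -(parseval u ov) big_distrr.
apply: ler_sum => j _; apply: ler_wpM2r (lb j).
by rewrite -conj_dotp mulrC mul_conjC_ge0.
Qed.

Lemma rayleigh_ubound M u : (forall j, l j <= M) -> qform A u <= M * dotp u u.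
Proof.
case: Adec => ov _ _ ub; rewrite qform_spec_decomp -(parseval u ov) big_distrr.
apply: ler_sum => j _; apply: ler_wpM2r (ub j).
by rewrite -conj_dotp mulrC mul_conjC_ge0.
Qed.

Lemma spec_decomp_dotp_eig k w :
  dotp (v k) (fun s => \sum_t A s t * w t) = l k * dotp (v k) w.
Proof.
have hA := spec_decomp_hermitian; have [_ lr _] := Adec.
have row t : \sum_s (v k s)^* * A s t = l k * (v k t)^*.
  rewrite -(conj_Creal (lr k)) -rmorphM -spec_decomp_eigenvector rmorph_sum.
  by apply: eq_bigr => s _; rewrite rmorphM /= -hA mulrC.
transitivity (\sum_t (\sum_s (v k s)^* * A s t) * w t).
  rewrite /dotp; under eq_bigr do rewrite big_distrr /=.
  rewrite exchange_big /=; apply: eq_bigr => t _; rewrite big_distrl.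
  by apply: eq_bigr => s _ /=; ring.
by rewrite /dotp big_distrr; apply: eq_bigr => t _ /=; rewrite row mulrA.
Qed.

End Decomposition.

Lemma spec_decomp_eig_mem {A l v m f} :
  spec_decomp A l v -> spec_decomp A m f -> forall j, exists k, l k = m j.
Proof.
move=> Adec Bdec j; have [ov _ _] := Adec; have [of_ _ _] := Bdec.
case: (pickP (fun k => dotp (v k) (f j) != 0)) => [k nz|all0].
  exists k; apply: (mulIf nz); rewrite -(spec_decomp_dotp_eig Adec).
  rewrite /dotp big_distrr; apply: eq_bigr => s _ /=.
  by rewrite (spec_decomp_eigenvector Bdec); ring.
have := parseval (f j) ov; rewrite orthonormal_dotpp // big1 => [/eqP|k _].
  by rewrite eq_sym oner_eq0.
by move/negbFE/eqP: (all0 k) ->; rewrite mulr0.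
Qed.

Lemma spec_decomp_sorted {A l v} asc : spec_decomp A l v ->
  exists l' v', sorted_spec_decomp A asc l' v'.
Proof.
case=> ov lr hA.
have [sg sgi sgm] : exists2 sg : 'I_#|T| -> 'I_#|T|, injective sg &
    forall i j : 'I_#|T|, (i <= j)%N ->
    if asc then l (sg i) <= l (sg j) else l (sg j) <= l (sg i).
  case: asc; [apply: (@sort_ord_exists _ (fun i j => l i <= l j))
             |apply: (@sort_ord_exists _ (fun i j => l j <= l i))].
  - by move=> i j; rewrite real_leVge.
  - by move=> j i k; exact: le_trans.
  - by move=> i j; rewrite real_leVge.
  - by move=> j i k h1 h2; exact: le_trans h2 h1.
exists (l \o sg), (v \o sg); split => //=.
- by move=> j k; rewrite [LHS]ov (inj_eq sgi).
- by move=> s t; rewrite hA (reindex_inj sgi).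
Qed.

Lemma hermitian_spec_decomp A : hermitian A -> exists l v, spec_decomp A l v.
Proof.
move=> hA.
pose M : 'M[C]_#|T| := \matrix_(i, j) A (enum_val i) (enum_val j).
have Mh : M \is hermsymmx.
  apply/is_hermitianmxP; rewrite expr0 scale1r; apply/matrixP => i j.
  by rewrite !mxE hA.
have Pu := spectral_unitarymx M.
have eM := orthomx_spectralP (hermitian_normalmx Mh).
rewrite invmx_unitary // in eM.
have Dr := hermitian_spectral_diag_real Mh.
set P := spectralmx M in eM Pu; set D := spectral_diag M in eM Dr.
exists (fun j => D 0 j), (fun j t => (P j (enum_rank t))^*); split.
- move=> j k; have /matrixP /(_ j k) := unitarymxP Pu.
  rewrite !mxE => <-; rewrite (reindex enum_rank) /=; last first.
    by apply: onW_bij; exact: enum_rank_bij.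
  by apply: eq_bigr => t _; rewrite conjCK !mxE.
- by move=> j; exact: (mxOverP Dr).
- move=> s t.
  have -> : A s t = M (enum_rank s) (enum_rank t) by rewrite mxE !enum_rankK.
  rewrite eM mxE; apply: eq_bigr => j _; rewrite !mxE conjCK.
  rewrite (bigD1 j) //= big1 ?addr0; first by rewrite !mxE eqxx mulr1n; ring.
  by move=> k hk; rewrite !mxE (negbTE hk) mulr0n mulr0.
Qed.

Lemma eigsys_spec {A} asc : hermitian A ->
  sorted_spec_decomp A asc (eigsys A asc).1 (eigsys A asc).2.
Proof.
move=> /hermitian_spec_decomp [l [v /(spec_decomp_sorted asc) [l' [v' hd]]]].
apply: (epsilon_spec eigsys_inhabited (fun p => sorted_spec_decomp A asc p.1 p.2)).
by exists (l', v').
Qed.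

Lemma equispaced_spec_decomp {H eps} : equispaced H eps ->
  exists f, spec_decomp H (fun j : 'I_#|T| => j%:R * eps) f.
Proof.
by case=> eps0 [f [of_ hf]]; exists f; split => // j; rewrite rpredM ?realn ?gtr0_real.
Qed.

Lemma equispaced_sorted_eigs {H eps l v} : equispaced H eps ->
  sorted_spec_decomp H true l v -> forall k : 'I_#|T|, l k = k%:R * eps.
Proof.
move=> Heq Hdec; have [f Fdec] := equispaced_spec_decomp Heq; have [eps0 _] := Heq.
have hex (j : 'I_#|T|) : exists k, l k == j%:R * eps.
  have [k hk] := spec_decomp_eig_mem (sorted_spec_decompW Hdec) Fdec j.
  by exists k; rewrite hk.
(* Surjectivity onto the j * eps suffices: since l is sorted and the j * eps are
   distinct, a right inverse tau is strictly increasing, hence the identity. *)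
pose tau j := xchoose (hex j).
have htau j : l (tau j) = j%:R * eps := eqP (xchooseP (hex j)).
have tau_incr : {homo tau : i j / (i < j)%N}.
  move=> i j lt_ij; rewrite ltnNge; apply/negP => le_ji.
  have [_ _ so _] := Hdec; move: (so _ _ le_ji); rewrite !htau ler_pM2r // ler_nat.
  by rewrite leqNgt lt_ij.
by move=> k; rewrite -{1}(ord_homo_ltn_id tau_incr k) htau.
Qed.

Section SortedExtremes.
Context {A : Op C T} {l : 'I_#|T| -> C} {v : 'I_#|T| -> Ket C T}.
Hypothesis Adec : sorted_spec_decomp A true l v.
Variable h0 : (0 < #|T|)%N.

Lemma sorted_spec_decomp_min {m u0} : dotp u0 u0 = 1 -> qform A u0 = m ->
  (forall u, m * dotp u u <= qform A u) -> l (Ordinal h0) = m.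
Proof.
have [ov _ l_asc _] := Adec; have Adec' := sorted_spec_decompW Adec.
move=> u01 qu0 lb; apply/le_anti/andP; split.
  rewrite -qu0 -[l _]mulr1 -u01; apply: (rayleigh_lbound Adec') => j.
  exact: l_asc.
by rewrite -(qform_eigenvector Adec') -[m]mulr1 -(orthonormal_dotpp ov (Ordinal h0)).
Qed.

Lemma sorted_spec_decomp_max {M u1} : dotp u1 u1 = 1 -> qform A u1 = M ->
  (forall u, qform A u <= M * dotp u u) -> l (rev_ord (Ordinal h0)) = M.
Proof.
have [ov _ l_asc _] := Adec; have Adec' := sorted_spec_decompW Adec.
move=> u11 qu1 ub; apply/le_anti/andP; split.
  rewrite -(qform_eigenvector Adec') -[M]mulr1.
  by rewrite -(orthonormal_dotpp ov (rev_ord (Ordinal h0))).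
rewrite -qu1 -[l _]mulr1 -u11; apply: (rayleigh_ubound Adec') => j.
by apply: l_asc; rewrite /= ord_leq_subn1.
Qed.

End SortedExtremes.

End Spectral.

Section Capacity.
Context {C : numClosedFieldType} {T : finType}.
Implicit Types (H rho : Op C T) (psi u : Ket C T).

Lemma outer_hermitian psi : hermitian (outer psi psi).
Proof. by move=> s t; rewrite /outer rmorphM /= conjCK mulrC. Qed.

Lemma tr_outer psi : tr (outer psi psi) = dotp psi psi.
Proof. by apply: eq_bigr => t _; rewrite mulrC. Qed.

Lemma pure_state_eig01 {psi p w} : dotp psi psi = 1 ->
  spec_decomp (outer psi psi) p w -> forall k, (p k == 0) || (p k == 1).
Proof.
move=> hn Pdec k; have [ow _ _] := Pdec; pose c := dotp psi (w k).
have eig s : psi s * c = p k * w k s.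
  rewrite -(spec_decomp_eigenvector Pdec) /c /dotp big_distrr.
  by apply: eq_bigr => t _; rewrite /outer /=; ring.
have c_fix : c = p k * c.
  transitivity (\sum_s (psi s)^* * (psi s * c)).
    by rewrite -[LHS]mul1r -hn big_distrl; apply: eq_bigr => s _ /=; ring.
  under eq_bigr do rewrite eig.
  by rewrite /c /dotp big_distrr; apply: eq_bigr => s _ /=; ring.
have p_sq : p k = c^* * c.
  transitivity (\sum_s (w k s)^* * (psi s * c)).
    under eq_bigr do rewrite eig.
    rewrite -[LHS]mulr1 -(orthonormal_dotpp ow k) big_distrr.
    by apply: eq_bigr => s _ /=; ring.
  by rewrite conj_dotp /dotp big_distrl; apply: eq_bigr => s _ /=; ring.
have [c0|cn0] := eqVneq c 0; first by rewrite p_sq c0 mulr0 eqxx.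
by apply/orP; right; apply/eqP/(mulIf cn0); rewrite mul1r -c_fix.
Qed.

Lemma pure_state_sorted_eigs {psi p w} : dotp psi psi = 1 ->
  sorted_spec_decomp (outer psi psi) false p w ->
  forall (h0 : (0 < #|T|)%N) k, p k = (k == Ordinal h0)%:R.
Proof.
move=> hn Pdec h0 k.
have p01 := pure_state_eig01 hn (sorted_spec_decompW Pdec).
have p_ge0 j : 0 <= p j by case/orP: (p01 j) => /eqP ->; rewrite ?ler01.
have p_sum : \sum_j p j = 1.
  by rewrite -(tr_spec_decomp (sorted_spec_decompW Pdec)) tr_outer.
set k0 := Ordinal h0; have [_ _ p_desc _] := Pdec.
have p_k0 : p k0 = 1.
  case/orP: (p01 k0) => /eqP // pk0; move: p_sum; rewrite big1 => [/eqP|j _].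
    by rewrite eq_sym oner_eq0.
  by apply/le_anti; rewrite p_ge0 -pk0 (p_desc k0 j).
have [->|nk0] := eqVneq k k0; first by rewrite p_k0.
have : \sum_(j | j != k0) p j = 0.
  by move: p_sum; rewrite (bigD1 k0) //= p_k0 => /(canRL (addKr 1)); rewrite addNr.
by move/(psumr_eq0P (fun j _ => p_ge0 j))/(_ k nk0) => ->.
Qed.

Lemma passive_energyE rho H : hermitian H ->
  passive_energy rho H = \sum_j state_eigs rho j * (eigsys H true).1 j.
Proof.
move=> hH; rewrite /passive_energy /passive /ham_basis.
exact: (energy_spec_decomp (sorted_spec_decompW (eigsys_spec true hH))).
Qed.

Lemma active_energyE rho H : hermitian H ->
  active_energy rho H = \sum_j state_eigs rho (rev_ord j) * (eigsys H true).1 j.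
Proof.
move=> hH; rewrite /active_energy /active /ham_basis.
exact: (energy_spec_decomp (sorted_spec_decompW (eigsys_spec true hH))
  (fun j => state_eigs rho (rev_ord j))).
Qed.

Lemma capacity_pure {psi H} (h0 : (0 < #|T|)%N) : dotp psi psi = 1 -> hermitian H ->
  capacity (outer psi psi) H =
  (eigsys H true).1 (rev_ord (Ordinal h0)) - (eigsys H true).1 (Ordinal h0).
Proof.
move=> hn hH; rewrite /capacity active_energyE // passive_energyE //.
have pe := pure_state_sorted_eigs hn (eigsys_spec false (outer_hermitian psi)) h0.
rewrite (reindex_inj rev_ord_inj) /=.
under eq_bigr do rewrite rev_ordK /state_eigs pe mulrC.
under [X in _ - X]eq_bigr do rewrite /state_eigs pe mulrC.
by rewrite !sum_mulr_eqb.
Qed.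

Lemma equispaced_hermitian {H eps} : equispaced H eps -> hermitian H.
Proof. by case/equispaced_spec_decomp => f /spec_decomp_hermitian. Qed.

Lemma capacity_equispaced {rho H eps} : hermitian rho -> tr rho = 1 ->
  equispaced H eps -> capacity rho H = (#|T| - 1)%:R * eps - 2 * passive_energy rho H.
Proof.
move=> hr tr1 he; have hH := equispaced_hermitian he.
have el := equispaced_sorted_eigs he (eigsys_spec true hH).
have p_sum : \sum_j state_eigs rho j = 1.
  by rewrite -(tr_spec_decomp (sorted_spec_decompW (eigsys_spec false hr))).
have pass : passive_energy rho H = \sum_j state_eigs rho j * (j%:R * eps).
  by rewrite passive_energyE //; apply: eq_bigr => j _; rewrite el.
have act : active_energy rho H = (#|T| - 1)%:R * eps - passive_energy rho H.
  rewrite active_energyE // (reindex_inj rev_ord_inj) pass.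
  have -> : (#|T| - 1)%:R * eps = \sum_j state_eigs rho j * ((#|T| - 1)%:R * eps).
    by rewrite -big_distrl /= p_sum mul1r.
  rewrite -sumrB; apply: eq_bigr => j _ /=.
  by rewrite rev_ordK el -(@rev_ord_addn #|T| j) natrD; ring.
by rewrite /capacity act; ring.
Qed.

Lemma qform_equispaced_bounds {H eps} u : equispaced H eps ->
  0 <= qform H u /\ qform H u <= (#|T| - 1)%:R * eps * dotp u u.
Proof.
move=> he; have [f Fdec] := equispaced_spec_decomp he; have [eps0 _] := he.
split.
  rewrite -[0](mul0r (dotp u u)); apply: (rayleigh_lbound Fdec) => j.
  by rewrite mulr_ge0 ?ler0n ?ltW.
by apply: (rayleigh_ubound Fdec) => j; rewrite ler_pM2r // ler_nat ord_leq_subn1.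
Qed.

End Capacity.

Lemma card_conf_gt0 n (Y : {set 'I_n}) : (0 < #|conf Y|)%N.
Proof. by apply/card_gt0P; exists [ffun _ => false]. Qed.

Section Bipartition.
Context {C : numClosedFieldType} {n : nat} {X : {set 'I_n}}.
Implicit Types (a : qconf n) (x : conf X) (y : conf (~: X)) (u : Ket C (qconf n)).

Definition join x y : qconf n :=
  [ffun i => if insub i is Some j then x j else if insub i is Some j' then y j' else false].

Lemma restr_join x y : restr X (join x y) = x.
Proof. by apply/ffunP => j; rewrite !ffunE valK. Qed.

Lemma restrC_join x y : restr (~: X) (join x y) = y.
Proof.
apply/ffunP => j; rewrite !ffunE insubF ?valK //.
by have := valP j; rewrite inE => /negbTE.
Qed.

Lemma join_restr a : join (restr X a) (restr (~: X) a) = a.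
Proof.
apply/ffunP => i; rewrite ffunE; case: insubP => [j _ <-|hi]; first by rewrite ffunE.
case: insubP => [j _ <-|hi']; first by rewrite ffunE.
by move: hi'; rewrite inE hi.
Qed.

Lemma restr_eq a a' :
  (restr X a == restr X a') && (restr (~: X) a == restr (~: X) a') = (a == a').
Proof.
apply/andP/eqP => [[/eqP h1 /eqP h2]|->] //.
by rewrite -(join_restr a) -(join_restr a') h1 h2.
Qed.

Lemma sum_qconf_join (F : qconf n -> C) : \sum_a F a = \sum_x \sum_y F (join x y).
Proof.
rewrite pair_big /= (reindex (fun p : conf X * conf (~: X) => join p.1 p.2)) //=.
exists (fun a => (restr X a, restr (~: X) a)) => [[x y] _|a _] /=.
  by rewrite restr_join restrC_join.
by rewrite join_restr.
Qed.

Context {HX : Op C (conf X)} {HXc : Op C (conf (~: X))}.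

Lemma bipartite_ham_hermitian : hermitian HX -> hermitian HXc ->
  hermitian (bipartite_ham HX HXc).
Proof.
move=> h1 h2 a a'; rewrite /bipartite_ham rmorphD !rmorphM /= !rmorph_nat -h1 -h2.
by rewrite ![restr _ a' == _]eq_sym.
Qed.

Definition slicel u y : Ket C (conf X) := fun x => u (join x y).
Definition slicer u x : Ket C (conf (~: X)) := fun y => u (join x y).

Lemma dotp_slicel u : dotp u u = \sum_y dotp (slicel u y) (slicel u y).
Proof. by rewrite /dotp sum_qconf_join exchange_big. Qed.

Lemma dotp_slicer u : dotp u u = \sum_x dotp (slicer u x) (slicer u x).
Proof. by rewrite /dotp sum_qconf_join. Qed.

Lemma qform_bipartite_ham u : qform (bipartite_ham HX HXc) u =
  \sum_y qform HX (slicel u y) + \sum_x qform HXc (slicer u x).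
Proof.
pose U x y := u (join x y).
rewrite /qform sum_qconf_join.
under eq_bigr => x _ do under eq_bigr => y _ do rewrite sum_qconf_join.
transitivity (\sum_x \sum_y (\sum_x' \sum_y'
    ((U x y)^* * HX x x' * (y == y')%:R * U x' y') +
    \sum_x' \sum_y' ((U x y)^* * (x == x')%:R * HXc y y' * U x' y'))).
  apply: eq_bigr => x _; apply: eq_bigr => y _.
  rewrite -big_split /=; apply: eq_bigr => x' _; rewrite -big_split /=.
  by apply: eq_bigr => y' _; rewrite /bipartite_ham !restr_join !restrC_join /U; ring.
under eq_bigr do rewrite big_split /=.
rewrite big_split /=; congr (_ + _).
  rewrite exchange_big /=; apply: eq_bigr => y _; apply: eq_bigr => x _.
  apply: eq_bigr => x' _; rewrite (bigD1 y) //= eqxx mulr1 [Z in _ + Z]big1 ?addr0 //.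
  by move=> y' hy'; rewrite eq_sym (negbTE hy') mulr0 mul0r.
apply: eq_bigr => x _; apply: eq_bigr => y _; rewrite exchange_big /=.
apply: eq_bigr => y' _; rewrite (bigD1 x) //= eqxx mulr1 [Z in _ + Z]big1 ?addr0 //.
by move=> x' hx'; rewrite eq_sym (negbTE hx') mulr0 !mul0r.
Qed.

Definition tensor (f : Ket C (conf X)) (g : Ket C (conf (~: X))) : Ket C (qconf n) :=
  fun a => f (restr X a) * g (restr (~: X) a).

Lemma slicel_tensor f g y : slicel (tensor f g) y =1 (fun x => f x * g y).
Proof. by move=> x; rewrite /slicel /tensor restr_join restrC_join. Qed.

Lemma slicer_tensor f g x : slicer (tensor f g) x =1 (fun y => g y * f x).
Proof. by move=> y; rewrite /slicer /tensor restr_join restrC_join mulrC. Qed.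

Lemma dotp_tensor f g : dotp (tensor f g) (tensor f g) = dotp f f * dotp g g.
Proof.
rewrite dotp_slicer mulrC big_distrr; apply: eq_bigr => x _ /=.
by rewrite (dotp_eq_fun (slicer_tensor f g x)) dotp_scaler mulrC.
Qed.

Lemma qform_bipartite_tensor f g : qform (bipartite_ham HX HXc) (tensor f g) =
  dotp g g * qform HX f + dotp f f * qform HXc g.
Proof.
rewrite qform_bipartite_ham; congr (_ + _); rewrite /dotp big_distrl /=.
  by apply: eq_bigr => y _; rewrite (qform_eq_fun _ (slicel_tensor f g y)) qform_scaler.
by apply: eq_bigr => x _; rewrite (qform_eq_fun _ (slicer_tensor f g x)) qform_scaler.
Qed.

Section Equispaced.
Context {eX eXc : C}.
Hypotheses (HXeq : equispaced HX eX) (HXceq : equispaced HXc eXc).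

Let Emax := (#|conf X| - 1)%:R * eX + (#|conf (~: X)| - 1)%:R * eXc.

Lemma qform_bipartite_bounds u : 0 <= qform (bipartite_ham HX HXc) u /\
  qform (bipartite_ham HX HXc) u <= Emax * dotp u u.
Proof.
have bX y := qform_equispaced_bounds (slicel u y) HXeq.
have bXc x := qform_equispaced_bounds (slicer u x) HXceq.
rewrite qform_bipartite_ham; split.
  by apply: addr_ge0; apply: sumr_ge0 => z _; [case: (bX z) | case: (bXc z)].
rewrite mulrDl {1}dotp_slicel dotp_slicer !big_distrr /=.
by apply: lerD; apply: ler_sum => z _; [case: (bX z) | case: (bXc z)].
Qed.

Lemma bipartite_ham_extreme_eigs (h0 : (0 < #|qconf n|)%N) :
  let l := (eigsys (bipartite_ham HX HXc) true).1 in
  l (Ordinal h0) = 0 /\ l (rev_ord (Ordinal h0)) = Emax.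
Proof.
have [f Fdec] := equispaced_spec_decomp HXeq; have [g Gdec] := equispaced_spec_decomp HXceq.
have [[of_ _ _] [og _ _]] := (Fdec, Gdec).
have hH := bipartite_ham_hermitian (equispaced_hermitian HXeq) (equispaced_hermitian HXceq).
have Hdec := eigsys_spec true hH; have bnd := qform_bipartite_bounds.
pose fX := Ordinal (card_conf_gt0 _ X); pose gX := Ordinal (card_conf_gt0 _ (~: X)).
have unit_tensor i k : dotp (tensor (f i) (g k)) (tensor (f i) (g k)) = 1.
  by rewrite dotp_tensor !orthonormal_dotpp // mulr1.
have q_tensor i k :
    qform (bipartite_ham HX HXc) (tensor (f i) (g k)) = i%:R * eX + k%:R * eXc.
  rewrite qform_bipartite_tensor (qform_eigenvector Fdec) (qform_eigenvector Gdec).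
  by rewrite !orthonormal_dotpp // !mul1r.
split.
  apply: (sorted_spec_decomp_min Hdec h0 (unit_tensor fX gX)).
    by rewrite q_tensor /= !mul0r addr0.
  by move=> u; rewrite mul0r; case: (bnd u).
apply: (sorted_spec_decomp_max Hdec h0 (unit_tensor (rev_ord fX) (rev_ord gX))).
  by rewrite q_tensor /Emax.
by move=> u; case: (bnd u).
Qed.

End Equispaced.

End Bipartition.

Section PartialTrace.
Context {C : numClosedFieldType} {n : nat} (X : {set 'I_n}).

Lemma tr_ptrace_outer {psi : Ket C (qconf n)} : normalized psi ->
  tr (ptrace X (outer psi psi)) = 1.
Proof.
move=> hn; rewrite /tr /ptrace -hn.
rewrite exchange_big /=; apply: eq_bigr => a _; rewrite exchange_big /=.
rewrite (bigD1 a) //= [Z in _ + Z]big1 ?addr0.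
  rewrite (bigD1 (restr X a)) //= !eqxx /= big1 ?addr0 //.
  by move=> x hx; rewrite eq_sym (negbTE hx).
move=> a' ha'; apply: big1 => x _.
case: ifP => // /and3P [/eqP h1 /eqP h2 h3].
by move: ha'; rewrite eq_sym -(restr_eq (X:=X)) h1 h2 eqxx h3.
Qed.

Lemma ptrace_hermitian {rho : Op C (qconf n)} : hermitian rho -> hermitian (ptrace X rho).
Proof.
move=> hr x x'; rewrite /ptrace rmorph_sum.
under [RHS]eq_bigr do rewrite rmorph_sum.
rewrite [RHS]exchange_big /=; apply: eq_bigr => a _; apply: eq_bigr => a' _ /=.
rewrite (fun_if Num.conj) rmorph0 -hr.
by rewrite [restr (~: X) a' == _]eq_sym andbCA.
Qed.

End PartialTrace.

Lemma capacity_gap_equispaced (C : numClosedFieldType) (n : nat) (psi : Ket C (qconf n))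
    (X : {set 'I_n}) (HX : Op C (conf X)) (HXc : Op C (conf (~: X))) eX eXc :
  normalized psi -> equispaced HX eX -> equispaced HXc eXc ->
  capacity_gap psi X HX HXc = 2 * ergo_gap psi X HX HXc.
Proof.
move=> hn heX heXc; rewrite /capacity_gap /ergo_gap; case: ifP => _; first by rewrite mulr0.
have h0 : (0 < #|qconf n|)%N by apply/card_gt0P; exists [ffun _ => false].
have hH := bipartite_ham_hermitian (equispaced_hermitian heX) (equispaced_hermitian heXc).
have unit_psi : dotp psi psi = 1 by rewrite -hn; apply: eq_bigr => a _; rewrite mulrC.
rewrite (capacity_pure h0 unit_psi hH).
have [-> ->] := bipartite_ham_extreme_eigs heX heXc h0.
have hr := outer_hermitian psi.
rewrite (capacity_equispaced (ptrace_hermitian X hr) (tr_ptrace_outer X hn) heX).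
rewrite (capacity_equispaced (ptrace_hermitian (~: X) hr) (tr_ptrace_outer (~: X) hn) heXc).
by ring.
Qed.

Theorem theorem1 (C : numClosedFieldType) (n : nat) (s : {set 'I_n})
    (psi : Ket C (qconf n))
    (HX : forall X : {set 'I_n}, Op C (conf X))
    (HXc : forall X : {set 'I_n}, Op C (conf (~: X)))
    (epsX epsXc : {set 'I_n} -> C) :
  normalized psi ->
  (forall X : {set 'I_n}, X \in powerset s -> X != set0 ->
     equispaced (HX X) (epsX X) /\ equispaced (HXc X) (epsXc X)) ->
  M_B s psi HX HXc = 2 * M_E s psi HX HXc /\
  (forall X : {set 'I_n}, X \in powerset s -> X != set0 ->
     capacity_gap psi X (HX X) (HXc X) = 2 * ergo_gap psi X (HX X) (HXc X)).
Proof.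
move=> hn heq.
have gaps X : X \in powerset s -> X != set0 ->
    capacity_gap psi X (HX X) (HXc X) = 2 * ergo_gap psi X (HX X) (HXc X).
  by move=> sX X0; have [hX hXc] := heq X sX X0; exact: capacity_gap_equispaced hn hX hXc.
split => //; rewrite /M_B /M_E mulrCA; congr (_ * _); rewrite big_distrr /=.
apply: eq_bigr => X sX; have [->|X0] := eqVneq X set0; last exact: gaps.
by rewrite /capacity_gap /ergo_gap eqxx mulr0.
Qed.
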